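(* Assume $X_0\in L^\infty$, $\beta\in\mathbb{R}$, $\lambda>0$. Let $w\in\mathscr{W}^{\mathrm{icx}}$. If $w(1)=w(1-)$ and the right derivative $w'$ does not belong to $L^2([0,1))$, then $\inf_{Q\in\mathscr{Q}}L(Q,w;\beta,\lambda)=-\infty$.
   Context: $(\Omega,\mathcal{F},\mathbb{P})$ is a complete nonatomic probability space. $\rho\in L^2$ with $\mathbb{P}(\rho>0)=1$ and $\mathrm{Var}[\rho]>0$. For a random variable $X$, $Q_X(t)=\inf\{y:\mathbb{P}(X\le y)>t\}$ for $t\in[0,1)$, $Q_X(1):=\lim_{t\uparrow1}Q_X(t)$; $Q_0:=Q_{X_0}$. $\mathscr{Q}$ is the set of increasing, right-continuous $Q:[0,1)\to\mathbb{R}$ with $\int_0^1Q^2<\infty$ (extended by $Q(1)=Q(1-)$). $\mathscr{W}^{\mathrm{icx}}$ is the set of increasing convex $w:[0,1]\to[0,\infty)$ with $w(0)=0$; each $w$ is identified with the finite Borel measure on $[0,1]$ with distribution function $w$ (with $w(0-):=0$). Define $$L(Q,w;\beta,\lambda)=\int_0^1(Q(s)-\beta)^2ds+\lambda\int_0^1Q(s)Q_\rho(1-s)ds-\Big(\int_{[0,1]}Q(s)dw(s)-\int_{[0,1]}Q_0(s)dw(s)\Big).$$ *)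

From HB Require Import structures.
From mathcomp Require Import all_boot all_order all_algebra.
From mathcomp Require Import all_classical all_reals all_analysis.
Set Implicit Arguments. Unset Strict Implicit. Unset Printing Implicit Defensive.
Import Order.TTheory GRing.Theory Num.Theory.
Import numFieldNormedType.Exports.
Local Open Scope classical_set_scope.
Local Open Scope ring_scope.

Definition nonatomic d (T : measurableType d) (R : realType)
    (P : probability T R) :=
  forall A : set T, measurable A -> (0 < P A)%E ->
    exists2 B : set T, measurable B & B `<=` A /\ (0 < P B)%E /\ (P B < P A)%E.

Definition quantile d (T : measurableType d) (R : realType)
    (P : probability T R) (X : T -> R) (t : R) : R :=
  inf [set y : R | (t%:E < P [set om | (X om <= y)%R])%E].

(* Extension of a function on [0,1) by its left limit at 1 : Q(1) := Q(1-),
   as an extended real (Q is nondecreasing on [0,1) for all uses below). *)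
Definition ext1 (R : realType) (Q : R -> R) (s : R) : \bar R :=
  if s < 1 then (Q s)%:E else ereal_sup [set (Q t)%:E | t in `[0, 1[].

Definition Qclass (R : realType) : set (R -> R) :=
  [set Q : R -> R | {in `[0, 1[ &, {homo Q : x y / x <= y}}
         /\ (forall s, 0 <= s < 1 -> Q x @[x --> s^'+] --> Q s)
         /\ (@lebesgue_measure R).-integrable
               `[0, 1[ (fun s : R => (Q s ^+ 2)%:E)].

(* w in \mathscr{W}^{icx}, identified with the finite Borel measure on [0,1]
   with distribution function w (w(0-) := 0): we take the distribution
   function F of that measure on all of R, i.e. F = 0 on ]-oo,0[,
   F = w on [0,1], F = w(1) on [1,+oo[. *)
Definition Wicx (R : realType) (F : cumulative R R) : Prop :=
  [/\ (forall x, x < 0 -> F x = 0),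
      (forall x, 1 <= x -> F x = F 1),
      F 0 = 0,
      (forall x, 0 <= x <= 1 -> 0 <= F x) &
      (forall x y t, 0 <= x <= 1 -> 0 <= y <= 1 -> 0 <= t <= 1 ->
          F ((1 - t) * x + t * y) <= (1 - t) * F x + t * F y)].

Definition rderiv (R : realType) (w : R -> R) (s : R) : R :=
  lim ((fun h : R => (w (s + h) - w s) / h) @ 0^'+).

Definition Lobj d (T : measurableType d) (R : realType)
    (P : probability T R) (X0 rho : T -> R) (F : cumulative R R)
    (beta lambda : R) (Q : R -> R) : \bar R :=
  let leb := (@lebesgue_measure R) in
  let mw := lebesgue_stieltjes_measure F in
  ((\int[leb]_(s in `]0%R, 1%R[) ((Q s - beta) ^+ 2)%:E)
   + lambda%:E * (\int[leb]_(s in `]0%R, 1%R[) (Q s * quantile P rho (1 - s))%:E)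
   - ((\int[mw]_(s in `[0%R, 1%R]) ext1 Q s)
      - (\int[mw]_(s in `[0%R, 1%R]) ext1 (quantile P X0) s)))%E.

(* Sample the convex [w] on the dyadic grid p_k = 1 - 2^-(k+1) and let c_(k+1)
   be its slope on [p_k, p_(k+1)], with c_0 = 0.  The step quantile Q_N is 0 on
   [0, p_0[ = [0, 1/2[, c_(k+1)/16 on [p_k, p_(k+1)[ for k < N - 1, and c_N/16
   on [p_(N-1), 1[.  Abel summation gives  \int Q_N dw >= E_N/16  and
   \int Q_N^2 <= E_N/128, where E_N = sum_(k < N) c_(k+1)^2 (p_(k+1) - p_k) is a
   Riemann sum of \int w'^2.  As Q_rho(1 - s) is bounded for s >= 1/2, AM-GM
   absorbs the rho-term, and the Q_0-term is bounded because X0 is; hence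
   L(Q_N) <= C - E_N/64.  A finite infimum would thus bound E_N; since
   w' <= c_(k+2) on [p_k, p_(k+1)[ and the dyadic gaps halve, monotone
   convergence would then put w' in L^2. *)

From HB Require Import structures.
From mathcomp Require Import all_boot all_order all_algebra.
From mathcomp Require Import all_classical all_reals all_analysis.
From mathcomp Require Import ring lra measurable_realfun.
Set Implicit Arguments. Unset Strict Implicit. Unset Printing Implicit Defensive.
Import Order.TTheory GRing.Theory Num.Theory.
Import numFieldNormedType.Exports.
Local Open Scope classical_set_scope.
Local Open Scope ring_scope.

Section integral_bounds.
Context d (T : measurableType d) (R : realType).
Variable mu : {measure set T -> \bar R}.
Local Open Scope ereal_scope.

Lemma le_integral_ge0 (D : set T) (f g : T -> \bar R) :
  (forall x, D x -> 0 <= g x) -> (forall x, D x -> f x <= g x) ->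
  \int[mu]_(x in D) f x <= \int[mu]_(x in D) g x.
Proof.
move=> g0 fg; rewrite integralE.
have fpos0 x : D x -> 0 <= f^\+ x by move=> _; exact: funepos_ge0.
have fposg x : D x -> f^\+ x <= g x by move=> Dx; rewrite funeposE ge_max fg // g0.
apply: (@le_trans _ _ (\int[mu]_(x in D) f^\+ x)).
  have := leeB (lexx (\int[mu]_(x in D) f^\+ x))
    (integral_ge0 mu (fun x _ => funeneg_ge0 f x)).
  by rewrite sube0.
rewrite (ge0_integralE _ fpos0) (ge0_integralE _ g0).
apply: ereal_sup_le => _ [h hf <-]; exists h => //= x; apply: le_trans (hf x) _.
by rewrite /patch; case: ifPn => // /set_mem Dx; exact: fposg.
Qed.

Lemma integral_cst_add_sum_indic (D : set T) (a : R) (c : nat -> R)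
    (A : nat -> set T) n :
  measurable D -> (forall k, measurable (A k)) -> (0 <= a)%R ->
  (forall k, 0 <= c k)%R ->
  \int[mu]_(x in D) (a + \sum_(k < n) c k * \1_(A k) x)%R%:E =
  a%:E * mu D + \sum_(k < n) (c k)%:E * mu (A k `&` D).
Proof.
move=> mD mA a0 c0.
have mcA k : measurable_fun D (fun x => (c k * \1_(A k) x)%R).
  by apply: measurable_funM; [exact: measurable_cst|exact: measurable_indic].
have cA0 k x : (0 <= c k * \1_(A k) x)%R by rewrite mulr_ge0.
under eq_integral do rewrite EFinD -sumEFin.
have aE0 x : D x -> (0 <= a%:E)%E by move=> _; rewrite lee_fin.
have sum0 x : D x -> (0 <= \sum_(k < n) (c k * \1_(A k) x)%:E)%E.
  by move=> _; apply: sume_ge0 => k _; rewrite lee_fin.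
have msum : measurable_fun D (fun x => \sum_(k < n) (c k * \1_(A k) x)%:E).
  by apply: emeasurable_sum => k; apply/measurable_EFinP.
rewrite (ge0_integralD mu mD aE0 (measurable_cst _) sum0 msum).
rewrite integral_cst // (ge0_integral_sum _ mD); last 2 first.
- by move=> k; apply/measurable_EFinP.
- by move=> k x _; rewrite lee_fin.
congr (_ + _); apply: eq_bigr => k _.
under eq_integral do rewrite EFinM.
rewrite ge0_integralZl ?integral_indic //.
all: by [move=> x _; rewrite lee_fin | rewrite lee_fin
        | apply/measurable_EFinP; exact: measurable_indic].
Qed.

End integral_bounds.

Definition convex01 (R : realType) (F : R -> R) : Prop :=
  forall x y t : R, 0 <= x <= 1 -> 0 <= y <= 1 -> 0 <= t <= 1 ->
    F ((1 - t) * x + t * y) <= (1 - t) * F x + t * F y.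

Definition slope (R : realType) (F : R -> R) (x y : R) : R :=
  (F y - F x) / (y - x).

Section convex_slope.
Context (R : realType) (F : R -> R).
Hypothesis Fcvx : convex01 F.

Lemma three_chord_slope x y z : 0 <= x -> x < y -> y < z -> z <= 1 ->
  slope F x y <= slope F x z <= slope F y z.
Proof.
move=> x0 xy yz z1; have xz := lt_trans xy yz.
have [yx zy zx] : [/\ 0 < y - x, 0 < z - y & 0 < z - x] by rewrite !subr_gt0.
pose t := (y - x) / (z - x).
have t01 : 0 <= t <= 1.
  apply/andP; split; first by rewrite divr_ge0 // ltW.
  by rewrite ler_pdivrMr // mul1r lerD2r ltW.
have Fy : F y <= (1 - t) * F x + t * F z.
  have {1}-> : y = (1 - t) * x + t * z by rewrite /t; field; rewrite gt_eqF.
  by apply: Fcvx; rewrite // ?x0 ?(le_trans x0 (ltW xz)) ?(le_trans (ltW xz) z1).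
have {Fy} : F y * (z - x) <= F x * (z - y) + F z * (y - x).
  have := ler_wpM2r (ltW zx) Fy.
  suff -> : ((1 - t) * F x + t * F z) * (z - x) = F x * (z - y) + F z * (y - x) by [].
  by rewrite /t; field; rewrite gt_eqF.
move=> Fy; rewrite /slope; apply/andP; split.
  by rewrite ler_pdivrMr // mulrAC ler_pdivlMr //; nra.
by rewrite ler_pdivrMr // mulrAC ler_pdivlMr //; nra.
Qed.

Lemma le_slope x y x' y' : 0 <= x -> x < y -> y <= y' -> y' <= 1 ->
  x <= x' -> x' < y' -> slope F x y <= slope F x' y'.
Proof.
move=> x0 xy yy' y'1 xx' x'y'; apply: (@le_trans _ _ (slope F x y')).
  case: (ltgtP y y') yy' => // [yy' _|-> _//].
  by case/andP: (three_chord_slope x0 xy yy' y'1).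
case: (ltgtP x x') xx' => // [xx' _|-> _//].
by case/andP: (three_chord_slope x0 xx' x'y' y'1).
Qed.

End convex_slope.

Lemma slope_ge0 (R : realType) (F : R -> R) x y :
  {homo F : u v / u <= v} -> x < y -> 0 <= slope F x y.
Proof. by move=> Fnd xy; rewrite divr_ge0 // subr_ge0 // ?Fnd // ltW. Qed.

Section right_derivative.
Context (R : realType) (F : R -> R).
Hypotheses (Fnd : {homo F : x y / x <= y}) (Fcvx : convex01 F).

Let dq s h := (F (s + h) - F s) / h.

Let dqE s h : (F (s + h) - F s) / h = slope F s (s + h).
Proof. by rewrite /slope addrAC subrr add0r. Qed.

Let dq_ge0 s h : 0 < h -> 0 <= dq s h.
Proof. by move=> h0; rewrite /dq dqE slope_ge0 // ltrDl. Qed.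

Let dq_set_neq0 s : s < 1 -> [set dq s h | h in `]0, 1 - s[] !=set0.
Proof.
move=> s1; exists (dq s ((1 - s) / 2)), ((1 - s) / 2) => //.
by rewrite /= in_itv/= divr_gt0 ?subr_gt0 //= ltr_pdivrMr // ltr_pMr ?subr_gt0 // ltr1n.
Qed.

Let dq_set_lbound s : lbound [set dq s h | h in `]0, 1 - s[] 0.
Proof. by move=> y [h]; rewrite /= in_itv/= => /andP[h0 _] <-; exact: dq_ge0. Qed.

Lemma rderivE s : 0 <= s < 1 -> rderiv F s = inf [set dq s h | h in `]0, 1 - s[].
Proof.
move=> /andP[s0 s1]; rewrite /rderiv; apply: cvg_lim => //.
apply: (@nondecreasing_at_right_cvgr _ _ 0 (BLeft (1 - s))).
- by rewrite bnd_simp subr_gt0.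
- move=> h h'; rewrite !in_itv/= => /andP[h0 h1] /andP[h'0 h'1] hh'.
  rewrite !dqE; case: (ltgtP h h') hh' => // [hh' _|-> _//].
  have [sh hh's] : s < s + h /\ s + h < s + h' by rewrite ltrDl ltrD2l.
  have h'1' : s + h' <= 1 by rewrite -lerBrDl ltW.
  by case/andP: (three_chord_slope Fcvx s0 sh hh's h'1').
- by exists 0; exact: dq_set_lbound.
Qed.

Lemma rderiv_ge0 s : 0 <= s < 1 -> 0 <= rderiv F s.
Proof.
move=> s01; rewrite rderivE //; apply: lb_le_inf; last exact: dq_set_lbound.
by case/andP: s01 => _ /dq_set_neq0.
Qed.

Let rderiv_le_slope0 s x : 0 <= s -> s < x -> x < 1 -> rderiv F s <= slope F s x.
Proof.
move=> s0 sx x1; rewrite rderivE ?s0 ?(lt_trans sx x1) //.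
apply: ge_inf; first by exists 0; exact: dq_set_lbound.
exists (x - s); first by rewrite /= in_itv/= subr_gt0 sx /= ltrD2r.
by rewrite /dq dqE addrC subrK.
Qed.

Lemma rderiv_le_slope s x y : 0 <= s -> s < x -> x < y -> y <= 1 ->
  rderiv F s <= slope F x y.
Proof.
move=> s0 sx xy y1; apply: le_trans (rderiv_le_slope0 s0 sx (lt_le_trans xy y1)) _.
by apply: (le_slope Fcvx) => //; rewrite ltW.
Qed.

Lemma rderiv_homo s s' : 0 <= s -> s <= s' -> s' < 1 -> rderiv F s <= rderiv F s'.
Proof.
move=> s0 le_ss'; case: (ltgtP s s') le_ss' => // [ss' _ s'1|<- //].
apply: le_trans (rderiv_le_slope0 s0 ss' s'1) _.
rewrite (@rderivE s') ?s'1 ?andbT ?(le_trans s0 (ltW ss')) //.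
apply: lb_le_inf; first exact: dq_set_neq0.
move=> y [h]; rewrite /= in_itv/= => /andP[h0 h1] <-.
rewrite /dq dqE; apply: (le_slope Fcvx) => //.
- by rewrite lerDl ltW.
- by rewrite -lerBrDl ltW.
- exact: ltW.
- by rewrite ltrDl.
Qed.

End right_derivative.

Definition dyadic (R : realType) (k : nat) : R := 1 - 2^-1 ^+ k.+1.
Arguments dyadic {R}.

Section dyadic_grid.
Context {R : realType}.
Local Notation p := (@dyadic R).

Lemma dyadic_lt1 k : p k < 1.
Proof. by rewrite /dyadic ltrBlDr ltrDl exprn_gt0. Qed.

Lemma dyadic_ge k : 2^-1 <= p k.
Proof.
rewrite /dyadic lerBrDr -lerBrDl [1 - _](_ : _ = 2^-1 :> R); last by field.
by rewrite -[leRHS]expr1 ler_wiXn2l // invf_le1 ?ler1n.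
Qed.

Lemma dyadic_ge0 k : 0 <= p k.
Proof. exact: le_trans (dyadic_ge k). Qed.

Lemma dyadic_homo : {homo p : i j / (i <= j)%N >-> i <= j}.
Proof. by move=> i j ij; rewrite lerB // ler_wiXn2l // invf_le1 ?ler1n. Qed.

Lemma dyadicS k : p k.+1 - p k = 2^-1 ^+ k.+2.
Proof. by rewrite /dyadic !exprS; field. Qed.

Lemma dyadic_ltS k : p k < p k.+1.
Proof. by rewrite -subr_gt0 dyadicS exprn_gt0. Qed.

Lemma subr_dyadic k : 1 - p k = 2^-1 ^+ k.+1.
Proof. by rewrite /dyadic opprB addrC subrK. Qed.

Lemma dyadic_cvg1 s : s < 1 -> exists n, s < p n.
Proof.
move=> s1; have e0 : 0 < 1 - s by rewrite subr_gt0.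
pose n := Num.Def.archi_bound (1 - s)^-1.
have hn : (1 - s)^-1 < n%:R by apply: archi_boundP; rewrite invr_ge0 ltW.
exists n; rewrite /dyadic ltrBrDr -ltrBrDl exprVn.
rewrite -invf_plt ?posrE ?exprn_gt0 //.
apply: lt_trans hn _; rewrite -natrX ltr_nat.
exact: ltn_trans (ltnSn n) (ltn_expl _ (ltnSn 1)).
Qed.

End dyadic_grid.
Arguments dyadic_homo {R x y}.

Section grid_sums.
Context (R : realType) (b : nat -> R).
Hypothesis b_homo : {homo b : i j / (i <= j)%N >-> i <= j}.

Definition grid_rank n (s : R) : nat := (\sum_(k < n) ((b k <= s)%R : nat))%N.

Lemma grid_rank_le n s : (grid_rank n s <= n)%N.
Proof.
rewrite -[leqRHS]card_ord -sum1_card; apply: leq_sum => k _.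
by case: (b k <= s).
Qed.

Lemma grid_rank_full n s : b n <= s -> grid_rank n s = n.
Proof.
move=> bn; rewrite /grid_rank (eq_bigr (fun=> 1%N)) ?sum1_card ?card_ord // => k _.
by rewrite (le_trans (b_homo (ltnW (ltn_ord k))) bn).
Qed.

Lemma lt_grid_rank n s : s < b n -> s < b (grid_rank n s).
Proof.
elim: n => [|n IH] sbn; first by rewrite /grid_rank big_ord0.
rewrite /grid_rank big_ord_recr /= -/(grid_rank n s).
case: (leP (b n) s) => bn; first by rewrite grid_rank_full // addn1.
by rewrite addn0 IH.
Qed.

Lemma telescope_indic (u : nat -> R) n s :
  \sum_(k < n) (u k.+1 - u k) * ((b k <= s)%R)%:R = u (grid_rank n s) - u 0%N.
Proof.
have full m : b m <= s ->
    \sum_(k < m.+1) (u k.+1 - u k) * ((b k <= s)%R)%:R = u m.+1 - u 0%N.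
  move=> bm; rewrite (eq_bigr (fun k : 'I_m.+1 => u k.+1 - u k)); last first.
    by move=> k _; rewrite (le_trans (b_homo (ltn_ord k : (k <= m)%N)) bm) mulr1.
  by rewrite -(big_mkord xpredT (fun k => u k.+1 - u k)) telescope_sumr.
elim: n => [|n IH]; first by rewrite big_ord0 /grid_rank big_ord0 subrr.
case: (leP (b n) s) => bn.
  rewrite full // /grid_rank big_ord_recr /= -/(grid_rank n s).
  by rewrite grid_rank_full // bn addn1.
by rewrite big_ord_recr /= IH /grid_rank big_ord_recr /= leNgt bn mulr0 addr0 addn0.
Qed.

End grid_sums.

Lemma abel_summation (R : realType) (u v : nat -> R) V n :
  \sum_(k < n) (u k.+1 - u k) * (V - v k) =
  u n * (V - v n) - u 0%N * (V - v 0%N) + \sum_(k < n) u k.+1 * (v k.+1 - v k).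
Proof.
elim: n => [|n IH]; first by rewrite !big_ord0 subrr add0r.
by rewrite !big_ord_recr /= IH; ring.
Qed.

Lemma indic_itv_ge (R : realType) (a s : R) :
  (\1_(`[a, +oo[ : set R) s : R) = ((a <= s)%R)%:R.
Proof. by rewrite indicE mem_setE in_itv /= andbT. Qed.

Lemma indic_itv_gt (R : realType) (a s : R) :
  (\1_(`]a, +oo[ : set R) s : R) = ((a < s)%R)%:R.
Proof. by rewrite indicE mem_setE in_itv /= andbT. Qed.

Section dyadic_chords.
Context (R : realType) (F : R -> R).
Hypotheses (Fnd : {homo F : x y / x <= y}) (Fcvx : convex01 F).
Local Notation p := (@dyadic R).

Definition chord (j : nat) : R := if j is k.+1 then slope F (p k) (p k.+1) else 0.

Lemma chord_ge0 j : 0 <= chord j.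
Proof. by case: j => [|k] //=; rewrite slope_ge0 // dyadic_ltS. Qed.

Lemma chord_leS j : chord j <= chord j.+1.
Proof.
case: j => [|k]; first exact: chord_ge0.
apply: (le_slope Fcvx); first exact: dyadic_ge0.
all: by rewrite ?dyadic_ltS // ltW ?dyadic_ltS ?dyadic_lt1.
Qed.

Lemma chord_homo : {homo chord : i j / (i <= j)%N >-> i <= j}.
Proof. by apply/nondecreasing_seqP => n; exact: chord_leS. Qed.

Lemma chord_sq_leS j : chord j ^+ 2 <= chord j.+1 ^+ 2.
Proof. by rewrite !expr2 ler_pM ?chord_ge0 ?chord_leS. Qed.

Lemma chord_mul_incr k :
  chord k.+1 * (F (p k.+1) - F (p k)) = chord k.+1 ^+ 2 * (p k.+1 - p k).
Proof. by rewrite /= /slope; field; rewrite subr_eq0 gt_eqF // dyadic_ltS. Qed.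

Definition stair N (s : R) : R :=
  \sum_(k < N) (chord k.+1 - chord k) * \1_(`[p k, +oo[ : set R) s.

Lemma stairE N s : stair N s = chord (grid_rank p N s).
Proof.
rewrite /stair; under eq_bigr do rewrite indic_itv_ge.
by rewrite (telescope_indic (@dyadic_homo R)) subr0.
Qed.

Lemma stair_sqE N s : stair N s ^+ 2 =
  \sum_(k < N) (chord k.+1 ^+ 2 - chord k ^+ 2) * \1_(`[p k, +oo[ : set R) s.
Proof.
under eq_bigr do rewrite indic_itv_ge.
by rewrite (telescope_indic (@dyadic_homo R) (fun j => chord j ^+ 2)) expr0n subr0 stairE.
Qed.

Lemma stair_ge0 N s : 0 <= stair N s.
Proof. by rewrite stairE chord_ge0. Qed.

Lemma stair_le N s : stair N s <= chord N.
Proof. by rewrite stairE chord_homo // grid_rank_le. Qed.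

Lemma stair_homo N : {homo stair N : s s' / s <= s'}.
Proof.
move=> s s' ss'; apply: ler_sum => k _.
rewrite ler_wpM2l ?subr_ge0 ?chord_leS // !indic_itv_ge ler_nat.
by case: (leP (p k) s) => // h; rewrite (le_trans h ss').
Qed.

Lemma stair_eq0 N s : s < p 0 -> stair N s = 0.
Proof.
move=> s0; rewrite /stair big1 // => k _; rewrite indic_itv_ge.
by rewrite leNgt (lt_le_trans s0 (dyadic_homo (leq0n k))) mulr0.
Qed.

Lemma stair_near N s : \forall x \near s^'+, stair N x = stair N s.
Proof.
have indic_near (a : R) :
    \forall x \near s^'+, (\1_(`[a, +oo[ : set R) x : R) = \1_(`[a, +oo[ : set R) s.
  case: (leP a s) => h; near=> x; rewrite !indic_itv_ge.
    have sx : s < x by near: x; exact: nbhs_right_gt.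
    by rewrite h (le_trans h (ltW sx)).
  have xa : x < a by near: x; exact: nbhs_right_lt.
  by rewrite !leNgt h xa.
elim: N => [|N IH]; first by near=> x; rewrite /stair !big_ord0.
near=> x; rewrite /stair !big_ord_recr /= -!/(stair N _).
have -> : stair N x = stair N s by near: x.
suff -> : (\1_(`[p N, +oo[ : set R) x : R) = \1_(`[p N, +oo[ : set R) s by [].
by near: x; exact: indic_near.
Unshelve. all: by end_near. Qed.

Definition energy N : R := \sum_(k < N) chord k.+1 ^+ 2 * (p k.+1 - p k).

Lemma energy_ge0 N : 0 <= energy N.
Proof.
by apply: sumr_ge0 => k _; rewrite mulr_ge0 ?sqr_ge0 // subr_ge0 ltW // dyadic_ltS.
Qed.

Lemma sum_dchord_sq_le N :
  \sum_(k < N) (chord k.+1 ^+ 2 - chord k ^+ 2) * (1 - p k) <= 2 * energy N.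
Proof.
rewrite (abel_summation (fun j => chord j ^+ 2)) expr0n mul0r subr0 -/(energy N).
rewrite mulr2n mulrDl mul1r lerD2r.
case: N => [|n]; first by rewrite expr0n mul0r /energy big_ord0.
rewrite /energy big_ord_recr /= subr_dyadic -dyadicS lerDr.
by apply: sumr_ge0 => k _; rewrite mulr_ge0 ?sqr_ge0 // subr_ge0 ltW // dyadic_ltS.
Qed.

Lemma energy_le_sum_dchord N :
  energy N <= \sum_(k < N) (chord k.+1 - chord k) * (F 1 - F (p k)).
Proof.
rewrite (abel_summation chord (fun j => F (p j))) mul0r subr0.
under [X in _ <= _ + X]eq_bigr do rewrite chord_mul_incr.
by rewrite lerDr mulr_ge0 ?chord_ge0 // subr_ge0 Fnd // ltW // dyadic_lt1.
Qed.

(* The left side is the integral over [0, 1[ of the step function equal to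
   [chord 1 ^+ 2] on [0, p 0[ and to [chord k.+2 ^+ 2] on [p k, p k.+1[, which
   dominates [rderiv F ^+ 2] on [0, p n[; the dyadic gaps halve, whence the 4. *)
Lemma shifted_sum_dchord_sq_le n :
  chord 1 ^+ 2 + \sum_(k < n) (chord k.+2 ^+ 2 - chord k.+1 ^+ 2) * (1 - p k)
  <= 4 * energy n.+1.
Proof.
pose e k := chord k.+1 ^+ 2 * (p k.+1 - p k).
have e0 k : 0 <= e k.
  by rewrite mulr_ge0 ?sqr_ge0 // subr_ge0 ltW // dyadic_ltS.
rewrite (abel_summation (fun j => chord j.+1 ^+ 2)).
have -> : \sum_(k < n) chord k.+2 ^+ 2 * (p k.+1 - p k) = 2 * \sum_(k < n) e k.+1.
  by rewrite mulr_sumr; apply: eq_bigr => k _; rewrite /e !dyadicS !exprS; field.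
have -> : chord n.+1 ^+ 2 * (1 - p n) = 2 * e n.
  by rewrite /e subr_dyadic dyadicS !exprS; field.
have -> : chord 1 ^+ 2 * (1 - p 0) = 2 * e 0%N.
  by rewrite /e subr_dyadic dyadicS !exprS expr0; field.
have -> : chord 1 ^+ 2 = 4 * e 0%N by rewrite /e dyadicS !exprS expr0; field.
have en : e n <= energy n.+1.
  rewrite /energy big_ord_recr; apply: ler_wpDl => //.
  by apply: sumr_ge0 => k _; exact: e0.
move: en; rewrite /energy big_ord_recl -/(e 0%N).
by move: (\sum_(i < n) _) (e 0%N) (e n) => S t0 tn; lra.
Qed.

End dyadic_chords.

Section interval_measures.
Context (R : realType).

Lemma lebesgue_measure_itv_ge_oo01 (a : R) : 0 < a < 1 ->
  lebesgue_measure (`[a, +oo[ `&` `]0, 1[ : set R) = (1 - a)%:E.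
Proof.
case/andP=> a0 a1.
have -> : `[a, +oo[%classic `&` `]0, 1[%classic = `[a, 1[%classic :> set R.
  apply/seteqP; split => x /=; rewrite !in_itv /= ?andbT; first by case=> -> /andP[_ ->].
  by move=> /andP[ax ->]; rewrite (lt_le_trans a0 ax).
by rewrite lebesgue_measure_itv /= lte_fin a1.
Qed.

Lemma lebesgue_measure_itv_ge_co01 (a : R) : 0 <= a < 1 ->
  lebesgue_measure (`[a, +oo[ `&` `[0, 1[ : set R) = (1 - a)%:E.
Proof.
case/andP=> a0 a1.
have -> : `[a, +oo[%classic `&` `[0, 1[%classic = `[a, 1[%classic :> set R.
  apply/seteqP; split => x /=; rewrite !in_itv /= ?andbT; first by case=> -> /andP[_ ->].
  by move=> /andP[ax ->]; rewrite (le_trans a0 ax).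
by rewrite lebesgue_measure_itv /= lte_fin a1.
Qed.

Lemma lebesgue_measure_oo01 : lebesgue_measure (`]0, 1[%classic : set R) = 1%:E.
Proof. by rewrite lebesgue_measure_itv /= lte_fin ltr01 sube0. Qed.

Lemma lebesgue_measure_co01 : lebesgue_measure (`[0, 1[%classic : set R) = 1%:E.
Proof. by rewrite lebesgue_measure_itv /= lte_fin ltr01 sube0. Qed.

Lemma lebesgue_stieltjes_measure_oc (F : cumulative R R) (a b : R) : a <= b ->
  lebesgue_stieltjes_measure F (`]a, b] : set R) = (F b - F a)%:E.
Proof.
move=> ab; rewrite /lebesgue_stieltjes_measure /measure_extension /=.
by rewrite measurable_mu_extE /= ?wlength_itv_bnd //; exact: is_ocitv.
Qed.

Lemma lebesgue_stieltjes_measure_itv_gt_cc01 (F : cumulative R R) (a : R) :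
  0 <= a <= 1 ->
  lebesgue_stieltjes_measure F (`]a, +oo[ `&` `[0, 1] : set R) = (F 1 - F a)%:E.
Proof.
case/andP=> a0 a1.
have -> : `]a, +oo[%classic `&` `[0, 1]%classic = `]a, 1]%classic :> set R.
  apply/seteqP; split => x /=; rewrite !in_itv /= ?andbT; first by case=> -> /andP[_ ->].
  by move=> /andP[ax ->]; rewrite (le_trans a0 (ltW ax)).
exact: lebesgue_stieltjes_measure_oc.
Qed.

End interval_measures.

(* The factor 1/16 makes the quadratic part of the objective, of size
   [energy / 64], small against the linear gain [\int Q dw >= energy / 16]. *)
Definition Qstair (R : realType) (F : R -> R) N (s : R) : R := 16^-1 * stair F N s.

Section Qstair_bounds.
Context (R : realType) (F : cumulative R R).
Hypotheses (F0 : forall x, x < 0 -> F x = 0) (Fcvx : convex01 F).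
Local Notation p := (@dyadic R).
Local Notation Q := (Qstair F).
Local Notation leb := (@lebesgue_measure R).

Let Fnd : {homo F : x y / x <= y}.
Proof. exact: cumulative_is_nondecreasing. Qed.

Lemma Qstair_ge0 N s : 0 <= Q N s.
Proof. by rewrite mulr_ge0 ?stair_ge0. Qed.

Lemma Qstair_homo N : {homo Q N : s s' / s <= s'}.
Proof. by move=> s s' ss'; rewrite ler_wpM2l ?stair_homo. Qed.

Lemma Qstair_Qclass N : Qclass (Q N).
Proof.
have Q2_homo : {homo (fun s => Q N s ^+ 2) : s s' / s <= s'}.
  by move=> s s' ss'; rewrite !expr2 ler_pM ?Qstair_ge0 ?Qstair_homo.
split; [by move=> s s' _ _; exact: Qstair_homo | split].
  move=> s _; apply: cvg_near_cst.
  by apply: filterS (stair_near F N s) => x; rewrite /Qstair => ->.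
apply/integrableP; split.
  by apply/measurable_EFinP; exact: nondecreasing_measurable.
apply: le_lt_trans (le_integral_ge0 (g := cst ((16^-1 * chord F N) ^+ 2)%:E) _ _ _) _.
- by move=> x _; rewrite lee_fin sqr_ge0.
- move=> x _; rewrite gee0_abs ?lee_fin ?sqr_ge0 // !expr2.
  by rewrite ler_pM ?Qstair_ge0 // ler_wpM2l ?stair_le.
rewrite integral_cst // [X in (_ * X)%E](_ : _ = 1%:E) ?mule1 ?ltry //.
exact: lebesgue_measure_co01.
Qed.

Lemma integral_cst_add_stair_sq (a kappa : R) N : 0 <= a -> 0 <= kappa ->
  (\int[leb]_(s in `]0%R, 1%R[) (a + kappa * stair F N s ^+ 2)%:E
    <= (a + 2 * kappa * energy F N)%:E)%E.
Proof.
move=> a0 kappa0; pose c k := kappa * (chord F k.+1 ^+ 2 - chord F k ^+ 2).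
have c0 k : 0 <= c k by rewrite mulr_ge0 // subr_ge0 chord_sq_leS.
under eq_integral do rewrite stair_sqE mulr_sumr.
under eq_integral do under eq_bigr do rewrite mulrA -/(c _).
rewrite (integral_cst_add_sum_indic leb (A := fun k => `[p k, +oo[%classic)) //.
rewrite [X in (_ * X)%E](_ : _ = 1%:E) ?mule1; last exact: lebesgue_measure_oo01.
rewrite (eq_bigr (fun k : 'I_N => (c k * (1 - p k))%:E)); last first.
  move=> k _; rewrite EFinM [X in (_ * X)%E = _](_ : _ = (1 - p k)%:E) //.
  apply: lebesgue_measure_itv_ge_oo01.
  by rewrite dyadic_lt1 andbT (lt_le_trans _ (dyadic_ge k)) // invr_gt0.
rewrite sumEFin -EFinD lee_fin lerD2l [2 * kappa]mulrC -mulrA.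
under eq_bigr do rewrite /c -mulrA.
by rewrite -mulr_sumr ler_wpM2l // sum_dchord_sq_le.
Qed.

Lemma integral_Qstair_sub_sq_le N beta :
  (\int[leb]_(s in `]0%R, 1%R[) ((Q N s - beta) ^+ 2)%:E
    <= (2 * beta ^+ 2 + energy F N / 64)%:E)%E.
Proof.
pose g s := (2 * beta ^+ 2 + 128^-1 * stair F N s ^+ 2)%:E.
apply: le_trans (le_integral_ge0 leb (g := g) _ _) _.
- by move=> s _; rewrite /g lee_fin; apply: addr_ge0; apply: mulr_ge0;
    rewrite ?sqr_ge0 ?invr_ge0.
- move=> s _; rewrite /g lee_fin -subr_ge0.
  suff -> : 2 * beta ^+ 2 + 128^-1 * stair F N s ^+ 2 - (Q N s - beta) ^+ 2
      = (Q N s + beta) ^+ 2 by exact: sqr_ge0.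
  by rewrite /Qstair; field.
apply: le_trans (integral_cst_add_stair_sq _ _ _) _.
- by rewrite pmulr_rge0 ?sqr_ge0.
- by rewrite invr_ge0.
by rewrite lee_fin le_eqVlt; apply/orP; left; apply/eqP; field.
Qed.

Lemma integral_Qstair_mul_le N (q : R -> R) (K eps : R) : 0 <= K -> 0 < eps ->
  (forall s, 2^-1 <= s < 1 -> q (1 - s) <= K) ->
  (\int[leb]_(s in `]0%R, 1%R[) (Q N s * q (1 - s))%:E
    <= (K / (64 * eps) + K * eps / 8 * energy F N)%:E)%E.
Proof.
move=> K0 eps0 qK; pose g s := (K / (64 * eps) + K * eps / 16 * stair F N s ^+ 2)%:E.
have g0 s : (0 <= g s)%E.
  rewrite /g lee_fin; apply: addr_ge0; first by rewrite divr_ge0 // pmulr_rge0 // ltW.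
  by rewrite mulr_ge0 ?sqr_ge0 // divr_ge0 // mulr_ge0 // ltW.
apply: le_trans (le_integral_ge0 leb (g := g) (fun s _ => g0 s) _) _.
  move=> s; rewrite /= in_itv /= => /andP[_ s1]; rewrite lee_fin.
  have [sp0|p0s] := ltP s (p 0).
    have -> : Q N s = 0 by rewrite /Qstair stair_eq0 // mulr0.
    by rewrite mul0r -lee_fin; exact: g0.
  apply: (@le_trans _ _ (Q N s * K)).
    by rewrite ler_wpM2l ?Qstair_ge0 // qK // s1 (le_trans (dyadic_ge 0) p0s).
  (* AM-GM *)
  rewrite -subr_ge0.
  have -> : K / (64 * eps) + K * eps / 16 * stair F N s ^+ 2 - Q N s * K
      = K * (2 * eps * stair F N s - 1) ^+ 2 / (64 * eps).
    by rewrite /Qstair; field; rewrite gt_eqF.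
  apply: divr_ge0; first by rewrite mulr_ge0 ?sqr_ge0.
  by rewrite pmulr_rge0 // ltW.
rewrite /g; apply: le_trans (integral_cst_add_stair_sq _ _ _) _.
- by rewrite divr_ge0 // pmulr_rge0 // ltW.
- by rewrite divr_ge0 // mulr_ge0 // ltW.
by rewrite lee_fin lerD2l le_eqVlt; apply/orP; left; apply/eqP; field.
Qed.

Local Notation muF := (lebesgue_stieltjes_measure F).

Lemma integral_ext1_Qstair_ge N :
  ((energy F N / 16)%:E <= \int[muF]_(s in `[0%R, 1%R]) ext1 (Q N) s)%E.
Proof.
pose c k := 16^-1 * (chord F k.+1 - chord F k).
have c0 k : 0 <= c k by rewrite mulr_ge0 // subr_ge0 chord_leS.
pose f s := (0 + \sum_(k < N) c k * \1_(`]p k, +oo[ : set R) s)%:E.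
have f0 s : (0 <= f s)%E.
  by rewrite lee_fin add0r; apply: sumr_ge0 => k _; rewrite mulr_ge0.
have QE s : Q N s = \sum_(k < N) c k * \1_(`[p k, +oo[ : set R) s.
  by rewrite /Qstair /stair mulr_sumr; apply: eq_bigr => k _; rewrite mulrA.
have f_le s t : (forall k : 'I_N, p k < s -> p k <= t) -> (f s <= (Q N t)%:E)%E.
  move=> st; rewrite lee_fin add0r QE; apply: ler_sum => k _.
  rewrite ler_wpM2l // indic_itv_gt indic_itv_ge ler_nat.
  by case: (ltP (p k) s) => // /st ->.
have fQ s : s \in `[0%R, 1%R] -> (f s <= ext1 (Q N) s)%E.
  rewrite in_itv /= => /andP[_ s1]; rewrite /ext1.
  case: ifPn => [_|_]; first by apply: f_le => k /ltW.
  apply: le_trans (ereal_sup_ubound _).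
    by apply: f_le => k _; exact/dyadic_homo/ltnW.
  by exists (p N); rewrite //= in_itv /= dyadic_ge0 dyadic_lt1.
apply: le_trans (le_integral_ge0 muF (fun s Ds => le_trans (f0 s) (fQ s Ds)) fQ).
rewrite /f (integral_cst_add_sum_indic muF (A := fun k => `]p k, +oo[%classic)) //;
  last exact: measurable_itv.
rewrite mul0e add0e (eq_bigr (fun k : 'I_N => (c k * (F 1 - F (p k)))%:E)); last first.
  move=> k _; rewrite EFinM [X in (_ * X)%E = _](_ : _ = (F 1 - F (p k))%:E) //.
  by apply: lebesgue_stieltjes_measure_itv_gt_cc01; rewrite dyadic_ge0 ltW ?dyadic_lt1.
rewrite sumEFin lee_fin /c; under eq_bigr do rewrite -mulrA.
by rewrite -mulr_sumr mulrC ler_wpM2l ?invr_ge0 // energy_le_sum_dchord.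
Qed.

Lemma integral_ext1_le (q : R -> R) (M : R) : 0 <= M -> (forall t, t < 1 -> q t <= M) ->
  (\int[muF]_(s in `[0%R, 1%R]) ext1 q s <= (M * F 1)%:E)%E.
Proof.
move=> M0 qM; apply: le_trans (le_integral_ge0 muF (g := cst M%:E) _ _) _.
- by move=> s _; rewrite lee_fin.
- move=> s _; rewrite /ext1; case: ifPn => [s1|_]; first by rewrite lee_fin qM.
  apply: ub_ereal_sup => y [t /=]; rewrite in_itv /= => /andP[_ t1] <-.
  by rewrite lee_fin qM.
rewrite integral_cst /=; last exact: measurable_itv.
rewrite EFinM lee_wpmul2l ?lee_fin //.
have <- : muF (`]-1, 1]%classic : set R) = (F 1)%:E.
  have Fm1 : F (-1) = 0 by apply: F0; lra.
  by rewrite lebesgue_stieltjes_measure_oc ?Fm1 ?subr0 //; lra.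
apply: le_measure; rewrite ?inE; [exact: measurable_itv|exact: measurable_itv|].
move=> x /=; rewrite !in_itv /= => /andP[x0 ->]; rewrite andbT.
by apply: lt_le_trans x0; rewrite ltrN10.
Qed.

Lemma Lobj_Qstair_le d (T : measurableType d) (P : probability T R)
    (X0 rho : T -> R) beta lambda (K M : R) :
  0 < lambda -> 0 <= K -> 0 <= M ->
  (forall s, 2^-1 <= s < 1 -> quantile P rho (1 - s) <= K) ->
  (forall t, t < 1 -> quantile P X0 t <= M) ->
  exists C, forall N,
    (Lobj P X0 rho F beta lambda (Q N) <= (C - energy F N / 64)%:E)%E.
Proof.
move=> lambda0 K0 M0 rhoK X0M.
pose eps := (4 * (lambda * K + 1))^-1.
have lambdaK0 : 0 <= lambda * K by rewrite mulr_ge0 // ltW.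
have eps0 : 0 < eps by rewrite invr_gt0 mulr_gt0 // ltr_wpDl.
have lambdaKeps : lambda * K * eps <= 4^-1.
  rewrite ler_pdivrMr; last by rewrite mulr_gt0 // ltr_wpDl.
  by move: lambdaK0; move: (lambda * K) => u u0; lra.
exists (2 * beta ^+ 2 + lambda * (K / (64 * eps)) + M * F 1) => N.
have I1 := integral_Qstair_sub_sq_le N beta.
have I2 := integral_Qstair_mul_le N K0 eps0 rhoK.
have I3 := integral_ext1_Qstair_ge N.
have I4 := integral_ext1_le M0 X0M.
rewrite /Lobj; apply: le_trans (leeB (leeD I1 (lee_wpmul2l _ I2)) (leeB I3 I4)) _.
  by rewrite lee_fin ltW.
rewrite -EFinM -!EFinB lee_fin.
have a0 := energy_ge0 F N.
have W : lambda * K * eps * energy F N <= 4^-1 * energy F N by rewrite ler_wpM2r.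
have -> : lambda * (K / (64 * eps) + K * eps / 8 * energy F N) =
  lambda * (K / (64 * eps)) + lambda * K * eps * energy F N / 8 by ring.
move: W a0; move: (lambda * K * eps * energy F N) (energy F N) => w a.
lra.
Qed.

End Qstair_bounds.

Section quantile_bounds.
Context d (T : measurableType d) (R : realType) (P : probability T R).

Let measurable_le (X : T -> R) (y : R) : measurable_fun setT X ->
  measurable [set om | (X om <= y)%R].
Proof.
move=> mX; have := mX measurableT _ (measurable_itv `]-oo, y]); rewrite setTI.
by congr measurable; apply/seteqP; split => x /=; rewrite in_itv.
Qed.

(* The [max] absorbs the junk value [inf = 0] of a set without infimum. *)
Lemma quantile_le_max (X : T -> R) (t y : R) :
  (t%:E < P [set om | (X om <= y)%R])%E -> quantile P X t <= Num.max y 0.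
Proof.
rewrite /quantile => tPy.
have [Xinf|] := pselect (has_inf [set y : R | (t%:E < P [set om | (X om <= y)%R])%E]).
  by apply: le_trans (ge_inf Xinf.2 tPy) _; rewrite le_max lexx.
by move=> /inf_out ->; rewrite le_max lexx orbT.
Qed.

Lemma quantile_ubound (X : T -> R) (t0 : R) : measurable_fun setT X -> t0 < 1 ->
  exists K, 0 <= K /\ forall t, t <= t0 -> quantile P X t <= K.
Proof.
move=> mX t01.
suff [y t0y] : exists y, (t0%:E < P [set om | (X om <= y)%R])%E.
  exists (Num.max y 0); split => [|t tt0]; first by rewrite le_max lexx orbT.
  by apply: quantile_le_max; apply: le_lt_trans t0y; rewrite lee_fin.
apply/not_existsP => PX.
pose E n := [set om | X om <= n%:R].
have mE n : measurable (E n) by exact: measurable_le.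
have UE : \bigcup_n E n = setT.
  apply/seteqP; split => // om _; exists (Num.Def.archi_bound `|X om|) => //.
  exact: le_trans (ler_norm _) (ltW (archi_boundP (normr_ge0 _))).
have ndE : {homo E : n m / (n <= m)%N >-> (n <= m)%O}.
  move=> n m nm; apply/subsetPset => om; rewrite /E /= => /le_trans; apply.
  by rewrite ler_nat.
have mUE : measurable (\bigcup_n E n) by rewrite UE.
have := @nondecreasing_cvg_mu _ _ _ P E mE mUE ndE.
rewrite UE => PE.
have PE1 : limn (P \o E) = 1%E by rewrite (cvg_lim _ PE) //; exact: probability_setT.
have : (limn (P \o E) <= t0%:E)%E.
  apply: lime_le; first by apply/cvg_ex; eexists; exact: PE.
  by apply: nearW => n /=; rewrite leNgt; apply/negP => PEn; apply: (PX n%:R).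
by rewrite PE1 lee_fin leNgt t01.
Qed.

Lemma Linfty_quantile_ubound (X : T -> R) : X \in Lfun P +oo%E ->
  exists M, 0 <= M /\ forall t, t < 1 -> quantile P X t <= M.
Proof.
rewrite inE => /andP[]; rewrite !inE /= => mX.
rewrite /finite_norm unlock /= ifT; last by rewrite probability_setT lte01.
move=> /ess_sup_inf.ess_supr_bounded [M /= [N [mN PN0 XM]]].
exists (Num.max M 0); split => [|t t1]; first by rewrite le_max lexx orbT.
apply: quantile_le_max; apply: (@lt_le_trans _ _ 1%E); first by rewrite lte_fin.
have PNC : P (~` N) = 1%E by rewrite probability_setC // PN0 sube0.
rewrite -PNC; apply: le_measure; rewrite ?inE; [exact: measurableC|exact: measurable_le|].
move=> om /= Nom; apply: le_trans (ler_norm _) _; rewrite leNgt; apply/negP => XMom.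
by apply: Nom; apply: XM => /=; rewrite leNgt XMom.
Qed.

End quantile_bounds.

Section square_integrability.
Context (R : realType).
Local Notation p := (@dyadic R).
Local Notation leb := (@lebesgue_measure R).

Lemma co01_bigcup_dyadic :
  `[0%R, 1%R[%classic = \bigcup_n (`[0%R, p n]%classic : set R).
Proof.
apply/seteqP; split => x /=; rewrite in_itv /=.
  by move=> /andP[x0 /dyadic_cvg1[n xn]]; exists n => //=; rewrite in_itv /= x0 ltW.
by move=> [n _]; rewrite /= in_itv /= => /andP[-> /le_lt_trans->] //; exact: dyadic_lt1.
Qed.

Lemma nondecreasing_co01_measurable (f : R -> R) :
  (forall x y, 0 <= x -> x <= y -> y < 1 -> f x <= f y) ->
  measurable_fun (`[0%R, 1%R[%classic : set R) f.
Proof.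
move=> f_homo; rewrite co01_bigcup_dyadic.
apply/measurable_fun_bigcup => n; first exact: measurable_itv.
pose clamp x := Num.min (Num.max x 0) (p n).
apply: (@eq_measurable_fun _ _ _ _ _ (f \o clamp)).
  by move=> x; rewrite inE /= in_itv /= => /andP[x0 xn]; rewrite /clamp /= max_l // min_l.
apply: nondecreasing_measurable; first exact: measurable_itv.
move=> x y xy; apply: f_homo; first by rewrite le_min le_max lexx orbT dyadic_ge0.
  by rewrite le_min2 // le_max2.
by apply: le_lt_trans (dyadic_lt1 n); rewrite ge_min lexx orbT.
Qed.

Lemma integrable_co01_of_dyadic_bound (f : R -> R) (B : R) :
  measurable_fun (`[0%R, 1%R[%classic : set R) f ->
  (forall s, 0 <= s < 1 -> 0 <= f s) ->
  (forall n, (\int[leb]_(s in `[0%R, 1%R[) (f s * \1_(`[0%R, p n[ : set R) s)%:E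
     <= B%:E)%E) ->
  leb.-integrable `[0, 1[ (fun s => (f s)%:E).
Proof.
move=> mf f0 fB; have mD : measurable (`[0%R, 1%R[%classic : set R) by [].
apply/integrableP; split; first exact/measurable_EFinP.
pose g n s := (f s * \1_(`[0%R, p n[ : set R) s)%:E.
have mg n : measurable_fun (`[0%R, 1%R[%classic : set R) (g n).
  by apply/measurable_EFinP; apply: measurable_funM => //; exact: measurable_indic.
have g0 n s : `[0%R, 1%R[%classic s -> (0 <= g n s)%E.
  by rewrite /= in_itv /= => s01; rewrite lee_fin mulr_ge0 ?f0 // indicE.
have g_homo s : `[0%R, 1%R[%classic s ->
    {homo g^~ s : n m / (n <= m)%N >-> (n <= m)%E}.
  rewrite /= in_itv /= => s01 n m nm; rewrite lee_fin ler_wpM2l ?f0 //.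
  rewrite !indicE !mem_setE !in_itv /=.
  case: (leP 0 s) => //= s0; case: (ltP s (p n)) => //= sn.
  by rewrite (lt_le_trans sn (dyadic_homo nm)).
have g_lim s : `[0%R, 1%R[%classic s -> limn (g^~ s) = (f s)%:E.
  rewrite /= in_itv /= => /andP[s0 /dyadic_cvg1[n0 sn0]].
  apply: cvg_lim => //; apply: cvg_near_cst; exists n0 => // n /= n0n.
  by rewrite /g indicE mem_setE in_itv /= s0 (lt_le_trans sn0 (dyadic_homo n0n)) mulr1.
have gf := @cvg_monotone_convergence _ _ _ leb _ mD _ mg g0 g_homo.
have -> : (\int[leb]_(s in `[0%R, 1%R[) `|(f s)%:E|
    = \int[leb]_(s in `[0%R, 1%R[) limn (g^~ s))%E.
  apply: eq_integral => s; rewrite inE => Ds.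
  have s01 : 0 <= s < 1 by move: Ds; rewrite /= in_itv.
  by rewrite g_lim // gee0_abs // lee_fin f0.
rewrite -(cvg_lim _ gf) //; apply: le_lt_trans (_ : _ <= B%:E)%E _; last exact: ltry.
apply: lime_le; first by apply/cvg_ex; eexists; exact: gf.
exact: nearW.
Qed.

End square_integrability.

Section rderiv_square_integrability.
Context (R : realType) (F : R -> R).
Hypotheses (Fnd : {homo F : x y / x <= y}) (Fcvx : convex01 F).
Local Notation p := (@dyadic R).
Local Notation leb := (@lebesgue_measure R).

Lemma rderiv_sq_trunc_le n s : 0 <= s < 1 ->
  rderiv F s ^+ 2 * \1_(`[0%R, p n[ : set R) s <= chord F (grid_rank p n s).+1 ^+ 2.
Proof.
case/andP => s0 s1; rewrite indicE mem_setE in_itv /= s0 /=.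
case: (ltP s (p n)) => sn; last by rewrite mulr0 sqr_ge0.
have s_rank := lt_grid_rank (@dyadic_homo R) sn.
rewrite mulr1 !expr2 ler_pM ?rderiv_ge0 ?s0 ?s1 //.
all: by apply: rderiv_le_slope; rewrite ?dyadic_ltS ?(ltW (dyadic_lt1 _)).
Qed.

Lemma integrable_rderiv_sq (B : R) : (forall N, energy F N <= B) ->
  leb.-integrable `[0, 1[ (fun s => (rderiv F s ^+ 2)%:E).
Proof.
move=> energyB; apply: (@integrable_co01_of_dyadic_bound _ _ (4 * B)).
- apply: measurable_funX; apply: nondecreasing_co01_measurable => x y x0 xy y1.
  exact: rderiv_homo.
- by move=> s _; exact: sqr_ge0.
move=> n; pose c k := chord F k.+2 ^+ 2 - chord F k.+1 ^+ 2.
have c0 k : 0 <= c k by rewrite subr_ge0 chord_sq_leS.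
pose h s := (chord F 1 ^+ 2 + \sum_(k < n) c k * \1_(`[p k, +oo[ : set R) s)%:E.
have sq_le_h s : `[0%R, 1%R[%classic s ->
    ((rderiv F s ^+ 2 * \1_(`[0%R, p n[ : set R) s)%:E <= h s)%E.
  rewrite /= in_itv /= => s01; rewrite /h lee_fin.
  suff -> : chord F 1 ^+ 2 + \sum_(k < n) c k * \1_(`[p k, +oo[ : set R) s
      = chord F (grid_rank p n s).+1 ^+ 2 by exact: rderiv_sq_trunc_le.
  rewrite /c; under eq_bigr do rewrite indic_itv_ge.
  by rewrite (telescope_indic (@dyadic_homo R) (fun j => chord F j.+1 ^+ 2)) addrC subrK.
apply: le_trans (le_integral_ge0 leb (g := h) _ sq_le_h) _.
  move=> s _; rewrite /h lee_fin addr_ge0 ?sqr_ge0 //.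
  by apply: sumr_ge0 => k _; rewrite mulr_ge0 ?indicE.
rewrite /h.
rewrite (integral_cst_add_sum_indic leb (A := fun k => `[p k, +oo[%classic)) ?sqr_ge0 //.
rewrite [X in (_ * X + _)%E](_ : _ = 1%E); last exact: lebesgue_measure_co01.
rewrite (eq_bigr (fun k : 'I_n => (c k * (1 - p k))%:E)); last first.
  move=> k _; rewrite EFinM [X in (_ * X)%E = _](_ : _ = (1 - p k)%:E) //.
  by apply: lebesgue_measure_itv_ge_co01; rewrite dyadic_ge0 dyadic_lt1.
rewrite mule1 sumEFin -EFinD lee_fin.
by apply: le_trans (shifted_sum_dchord_sq_le F n) _; rewrite ler_wpM2l.
Qed.

End rderiv_square_integrability.

Theorem lemma5p2 (d : measure_display) (T : measurableType d) (R : realType)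
    (P : probability T R) (X0 rho : T -> R) (beta lambda : R)
    (F : cumulative R R) :
  measure_is_complete P ->
  nonatomic P ->
  rho \in Lfun P 2%:E ->
  P [set om | 0 < rho om] = 1%E ->
  ('V_P[rho] > 0)%E ->
  X0 \in Lfun P +oo%E ->
  0 < lambda ->
  Wicx F ->
  F x @[x --> 1^'-] --> F 1 ->
  ~ (@lebesgue_measure R).-integrable
      `[0, 1[ (fun s => (rderiv F s ^+ 2)%:E) ->
  ereal_inf [set Lobj P X0 rho F beta lambda Q | Q in @Qclass R] = -oo%E.
Proof.
move=> _ _ rhoL2 _ _ X0Linfty lambda0 [F0 _ _ _ Fcvx] _; apply: contra_notP => Linf.
have Fnd : {homo F : x y / x <= y} by exact: cumulative_is_nondecreasing.
have mrho : measurable_fun setT rho.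
  by move: rhoL2; rewrite inE => /andP[]; rewrite !inE.
have [K [K0 rhoK]] : exists K, 0 <= K /\ forall t, t <= 2^-1 -> quantile P rho t <= K.
  by apply: quantile_ubound => //; lra.
have [M [M0 X0M]] := Linfty_quantile_ubound X0Linfty.
have rhoK' s : 2^-1 <= s < 1 -> quantile P rho (1 - s) <= K.
  by case/andP => s2 _; apply: rhoK; lra.
have [C LC] := Lobj_Qstair_le F0 Fcvx beta lambda0 K0 M0 rhoK' X0M.
have infL N : (ereal_inf [set Lobj P X0 rho F beta lambda Q | Q in @Qclass R]
    <= (C - energy F N / 64)%:E)%E.
  apply: le_trans (LC N); apply: ereal_inf_lbound.
  by exists (Qstair F N) => //; exact: Qstair_Qclass.
move: Linf infL; case: ereal_inf => [r _ infL| _ /(_ 0%N) //|//].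
apply: (integrable_rderiv_sq Fnd Fcvx (B := 64 * (C - r))) => N.
by have := infL N; rewrite lee_fin; lra.
Qed.
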